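(* In the deterministic generalized top-$k$ selective gossip setting described in the context (with $G$ connected), let $\{a,b\}\in E$. If for some candidate $j\in[n]$ and some agent $i\in[m]$ we have $X_{ij}(\infty)>\alpha_{ab}$, then $j\in S^\infty_{a'b'}$ for every $\{a',b'\}\in E$.
   Context: Fix integers $m\ge2$, $n\ge1$, $k\in[n]$. For $v\in\mathbb{R}^n$ let $\sigma$ be a permutation of $[n]$ with $v_{\sigma(1)}\ge\cdots\ge v_{\sigma(n)}$ and set $T_k(v)=\{j\in[n]: v_j\ge v_{\sigma(k)}\}$. Let $\{i_1(t),i_2(t)\}_{t\ge0}$ be a deterministic sequence of unordered pairs of distinct agents in $[m]$, and let $E$ be the set of pairs $\{a,b\}$ with $\{i_1(t),i_2(t)\}=\{a,b\}$ for infinitely many $t$; assume the graph $G=([m],E)$ is connected. Let $X(0)\in\mathbb{R}^{m\times n}$ and define $X(t)$ by: $S(t)=T_k(X_{i_1(t)}(t))\cup T_k(X_{i_2(t)}(t))$ (where $X_i(t)$ is row $i$), $X_{ij}(t+1)=\tfrac12(X_{i_1(t)j}(t)+X_{i_2(t)j}(t))$ if $i\in\{i_1(t),i_2(t)\}$ and $j\in S(t)$, and $X_{ij}(t+1)=X_{ij}(t)$ otherwise. The limit $X(\infty)=\lim_{t\to\infty}X(t)$ exists. For $\{a,b\}\in E$ let $\beta_{ab}(s)$ be the $s$-th time $t$ with $\{i_1(t),i_2(t)\}=\{a,b\}$, let $S^\infty_{ab}=\bigcap_{t\ge0}\bigcup_{s\ge t}S(\beta_{ab}(s))$, and $\alpha_{ab}=\min_{j\in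 S^\infty_{ab}}X_{aj}(\infty)$ (which also equals $\min_{j\in S^\infty_{ab}}X_{bj}(\infty)$). *)

From Stdlib Require Import Reals Lra Lia Relations.
Open Scope R_scope.

(* Indexing conventions: agents [m] = {0,...,m-1}, candidates [n] = {0,...,n-1},
   rows/vectors are functions nat -> R; only indices < n are meaningful. *)

Definition sorting_perm (n : nat) (v : nat -> R) (sigma : nat -> nat) : Prop :=
  (forall p, (p < n)%nat -> (sigma p < n)%nat) /\
  (forall p q, (p < n)%nat -> (q < n)%nat -> sigma p = sigma q -> p = q) /\
  (forall p q, (p <= q)%nat -> (q < n)%nat -> v (sigma q) <= v (sigma p)).

(* T_k(v) = { j in [n] : v_j >= v_{sigma(k)} }  (k is 1-indexed, so sigma(k)
   is sigma (k-1) with 0-indexed positions).  The threshold v_{sigma(k)}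
   does not depend on the choice of sorting permutation sigma. *)
Definition topk (n k : nat) (v : nat -> R) (j : nat) : Prop :=
  (j < n)%nat /\
  exists sigma, sorting_perm n v sigma /\ v (sigma (k - 1)%nat) <= v j.

Definition pair_is (i1 i2 : nat -> nat) (t a b : nat) : Prop :=
  (i1 t = a /\ i2 t = b) \/ (i1 t = b /\ i2 t = a).

Definition Edge (i1 i2 : nat -> nat) (a b : nat) : Prop :=
  forall T : nat, exists t, (T <= t)%nat /\ pair_is i1 i2 t a b.

Definition connected_graph (m : nat) (i1 i2 : nat -> nat) : Prop :=
  forall a b, (a < m)%nat -> (b < m)%nat -> clos_refl_trans nat (Edge i1 i2) a b.

Definition Sset (n k : nat) (X : nat -> nat -> nat -> R) (i1 i2 : nat -> nat)
  (t j : nat) : Prop :=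
  topk n k (X t (i1 t)) j \/ topk n k (X t (i2 t)) j.

Definition gossip_dynamics (n k : nat) (X : nat -> nat -> nat -> R)
  (i1 i2 : nat -> nat) : Prop :=
  forall t i j,
    (((i = i1 t \/ i = i2 t) /\ Sset n k X i1 i2 t j) ->
       X (S t) i j = (X t (i1 t) j + X t (i2 t) j) / 2) /\
    (~ ((i = i1 t \/ i = i2 t) /\ Sset n k X i1 i2 t j) ->
       X (S t) i j = X t i j).

(* S^infty_{ab} = bigcap_t bigcup_{s>=t} S(beta_ab(s)), i.e. j lies in S(t)
   for infinitely many of the times t at which the pair {a,b} interacts. *)
Definition Sinf (n k : nat) (X : nat -> nat -> nat -> R) (i1 i2 : nat -> nat)
  (a b j : nat) : Prop :=
  forall T : nat, exists t, (T <= t)%nat /\ pair_is i1 i2 t a b /\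
    Sset n k X i1 i2 t j.

Definition is_min_on (P : nat -> Prop) (f : nat -> R) (alpha : R) : Prop :=
  (exists j, P j /\ f j = alpha) /\ (forall j, P j -> alpha <= f j).

From Stdlib Require Import Reals.
From Stdlib Require Import Lra Lia Relations List Classical ClassicalDescription.
Open Scope R_scope.

(* Write S^oo_cd for the set of candidates chosen infinitely often
   when the edge {c,d} fires.  Three facts about the limit X(oo) drive the proof:
   (1) consensus: on S^oo_cd both endpoints agree, since after each such firing
       the two entries are equal;
   (2) domination: a candidate x outside S^oo_cd is, at late firings of {c,d},
       outside the top-k of each endpoint z, so at least k candidates of S^oo_cd
       have limit value >= X_zx(oo) at z;
   (3) hence, if fewer than k candidates reach a level w at c ("few_reach c w"),
       the same holds at d, and a candidate x with few_reach c (X_cx(oo)) lies in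
       S^oo_cd and keeps this property at d.
   For the theorem, the minimiser of alpha_ab is in the top-k of an endpoint c
   infinitely often, so few_reach c w for all w > alpha; this spreads along the
   connected graph to agent i with w = X_ij(oo), and then along the graph again
   to every edge {a',b'}, which puts j in S^oo_a'b'. *)

Definition upto (n : nat) (P : nat -> Prop) : list nat :=
  filter (fun y => if excluded_middle_informative (P y) then true else false)
    (seq 0 n).

Definition card_upto (n : nat) (P : nat -> Prop) : nat := length (upto n P).

Lemma In_upto n P y : In y (upto n P) <-> (y < n)%nat /\ P y.
Proof.
  unfold upto. rewrite filter_In, in_seq.
  destruct (excluded_middle_informative (P y));
    split; intros [H1 H2]; split; try easy; lia.
Qed.

Lemma NoDup_upto n P : NoDup (upto n P).
Proof. apply NoDup_filter, seq_NoDup. Qed.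

Lemma card_upto_mono n (P Q : nat -> Prop) :
  (forall y, (y < n)%nat -> P y -> Q y) -> (card_upto n P <= card_upto n Q)%nat.
Proof.
  intros HPQ. apply NoDup_incl_length; [apply NoDup_upto|].
  intros y Hy. apply In_upto in Hy as [Hyn HPy]. apply In_upto; auto.
Qed.

Lemma card_upto_le_image n (P : nat -> Prop) (f : nat -> nat) r :
  (forall y, (y < n)%nat -> P y -> exists q, (q < r)%nat /\ f q = y) ->
  (card_upto n P <= r)%nat.
Proof.
  intros Himg. rewrite <- (length_seq r 0), <- (length_map f).
  apply NoDup_incl_length; [apply NoDup_upto|].
  intros y Hy. apply In_upto in Hy as [Hyn HPy].
  destruct (Himg y Hyn HPy) as [q [Hq <-]]. apply in_map, in_seq. lia.
Qed.

Lemma card_upto_ge_inj n (P : nat -> Prop) (f : nat -> nat) r :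
  (forall q, (q < r)%nat -> (f q < n)%nat /\ P (f q)) ->
  (forall p q, (p < r)%nat -> (q < r)%nat -> f p = f q -> p = q) ->
  (r <= card_upto n P)%nat.
Proof.
  intros Hf Hinj. rewrite <- (length_seq r 0), <- (length_map f).
  apply NoDup_incl_length.
  - apply NoDup_map_NoDup_ForallPairs; [|apply seq_NoDup].
    intros p q Hp Hq. apply in_seq in Hp, Hq. apply Hinj; lia.
  - intros y Hy. apply in_map_iff in Hy as [q [<- Hq]]. apply in_seq in Hq.
    apply In_upto, Hf. lia.
Qed.

Lemma injective_surjective n (s : nat -> nat) :
  (forall p, (p < n)%nat -> (s p < n)%nat) ->
  (forall p q, (p < n)%nat -> (q < n)%nat -> s p = s q -> p = q) ->
  forall y, (y < n)%nat -> exists q, (q < n)%nat /\ s q = y.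
Proof.
  intros Hrange Hinj y Hy.
  assert (Hin : In y (map s (seq 0 n))).
  { apply (NoDup_length_incl (l := map s (seq 0 n)) (l' := seq 0 n)).
    - apply NoDup_map_NoDup_ForallPairs; [|apply seq_NoDup].
      intros p q Hp Hq. apply in_seq in Hp, Hq. apply Hinj; lia.
    - rewrite length_map. lia.
    - intros z Hz. apply in_map_iff in Hz as [q [<- Hq]]. apply in_seq in Hq.
      apply in_seq. specialize (Hrange q). lia.
    - apply in_seq. lia. }
  apply in_map_iff in Hin as [q [Hsq Hq]]. apply in_seq in Hq.
  exists q. split; [lia | exact Hsq].
Qed.

Lemma insertion_point (f : nat -> R) (w : R) n :
  (forall p q, (p <= q)%nat -> (q < n)%nat -> f q <= f p) ->
  exists p, (p <= n)%nat /\ (forall q, (q < p)%nat -> w <= f q) /\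
            (forall q, (p <= q)%nat -> (q < n)%nat -> f q < w).
Proof.
  induction n as [|n IH]; intros Hmono.
  - exists 0%nat. split; [lia|]. split; intros; lia.
  - destruct IH as [p [Hpn [Habove Hbelow]]].
    { intros p q Hpq Hq. apply Hmono; lia. }
    destruct (Nat.eq_dec p n) as [->|Hpn'].
    + destruct (Rle_lt_dec w (f n)) as [Hle|Hlt].
      * exists (S n). split; [lia|]. split; [|intros; lia].
        intros q Hq.
        destruct (Nat.eq_dec q n) as [->|]; [exact Hle | apply Habove; lia].
      * exists n. split; [lia|]. split; [exact Habove|].
        intros q Hq1 Hq2. replace q with n by lia. exact Hlt.
    + exists p. split; [lia|]. split; [exact Habove|].
      intros q Hq1 Hq2. destruct (Nat.eq_dec q n) as [->|]; [|apply Hbelow; lia].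
      apply Rle_lt_trans with (f p); [apply Hmono; lia | apply Hbelow; lia].
Qed.

Lemma sorting_perm_exists (v : nat -> R) n : exists sigma, sorting_perm n v sigma.
Proof.
  induction n as [|n [s [Hrange [Hinj Hsorted]]]].
  - exists (fun q => q). repeat split; intros; lia.
  - destruct (insertion_point (fun q => v (s q)) (v n) n Hsorted)
      as [p [Hpn [Habove Hbelow]]].
    assert (Hfresh : forall q, (q < n)%nat -> s q <> n)
      by (intros q Hq; specialize (Hrange q Hq); lia).
    (* insert the new index n at position p, shifting the later entries *)
    exists (fun q => if (q <? p)%nat then s q
             else if (q =? p)%nat then n else s (q - 1)%nat).
    split; [|split].
    + intros q Hq. destruct (Nat.ltb_spec q p); [specialize (Hrange q); lia|].
      destruct (Nat.eqb_spec q p); [lia|]. specialize (Hrange (q - 1)%nat). lia.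
    + intros q r Hq Hr.
      destruct (Nat.ltb_spec q p), (Nat.eqb_spec q p),
               (Nat.ltb_spec r p), (Nat.eqb_spec r p); intros E;
      first [ lia | (apply Hinj in E; lia)
            | (exfalso; eapply Hfresh; [|eassumption]; lia)
            | (exfalso; eapply Hfresh; [|symmetry; eassumption]; lia) ].
    + intros q r Hqr Hr.
      destruct (Nat.ltb_spec q p), (Nat.eqb_spec q p),
               (Nat.ltb_spec r p), (Nat.eqb_spec r p);
      first [ lia | apply Rle_refl | (apply Hsorted; lia)
            | (apply Habove; lia) | (left; apply Hbelow; lia) ].
Qed.

(* A member x of the top-k of v is beaten strictly by fewer than k candidates:
   they all precede position k-1 of a sorting permutation. *)
Lemma topk_few_strictly_above n k v x :
  (1 <= k)%nat -> topk n k v x -> (card_upto n (fun y => (v x < v y)%R) < k)%nat.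
Proof.
  intros Hk [Hx [s [[Hrange [Hinj Hsorted]] Hthr]]].
  enough (card_upto n (fun y => (v x < v y)%R) <= k - 1)%nat by lia.
  apply card_upto_le_image with (f := s). intros y Hy Hxy.
  destruct (injective_surjective n s Hrange Hinj y Hy) as [q [Hq <-]].
  exists q. split; [|reflexivity].
  destruct (Nat.lt_ge_cases q (k - 1)) as [|Hkq]; [assumption|].
  assert (v (s q) <= v (s (k - 1)%nat)) by (apply Hsorted; lia). lra.
Qed.

(* A candidate outside the top-k of v is beaten strictly by at least k members
   of the top-k, namely the first k entries of any sorting permutation. *)
Lemma not_topk_many_above n k v x :
  (k <= n)%nat -> (x < n)%nat -> ~ topk n k v x ->
  (k <= card_upto n (fun y => topk n k v y /\ (v x < v y)%R))%nat.
Proof.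
  intros Hkn Hx Hnot.
  destruct (sorting_perm_exists v n) as [s Hs].
  pose proof Hs as [Hrange [Hinj Hsorted]].
  assert (Hthr : v x < v (s (k - 1)%nat)).
  { apply Rnot_le_lt. intro Hle. apply Hnot. split; [exact Hx|]. exists s. auto. }
  apply card_upto_ge_inj with (f := s).
  - intros q Hq.
    assert (Hq' : v (s (k - 1)%nat) <= v (s q)) by (apply Hsorted; lia).
    split; [apply Hrange; lia|]. split; [|lra].
    split; [apply Hrange; lia|]. exists s. auto.
  - intros p q Hp Hq. apply Hinj; lia.
Qed.

Definition eventually (P : nat -> Prop) : Prop :=
  exists T, forall t, (T <= t)%nat -> P t.

Definition often (P : nat -> Prop) : Prop :=
  forall T, exists t, (T <= t)%nat /\ P t.

Lemma often_eventually (P Q : nat -> Prop) :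
  often P -> eventually Q -> exists t, P t /\ Q t.
Proof.
  intros HP [T HQ]. destruct (HP T) as [t [Ht HPt]]. exists t. auto.
Qed.

Lemma eventually_and (P Q : nat -> Prop) :
  eventually P -> eventually Q -> eventually (fun t => P t /\ Q t).
Proof.
  intros [T1 H1] [T2 H2]. exists (Nat.max T1 T2). intros t Ht. split.
  - apply H1; lia.
  - apply H2; lia.
Qed.

Lemma not_often (P : nat -> Prop) : ~ often P -> eventually (fun t => ~ P t).
Proof.
  intros Hnot. apply not_all_ex_not in Hnot as [T HT].
  exists T. intros t Ht HPt. apply HT. exists t. auto.
Qed.

Lemma often_or (P Q : nat -> Prop) :
  often (fun t => P t \/ Q t) -> often P \/ often Q.
Proof.
  intros HPQ. destruct (classic (often P)) as [|HnP]; [now left|right].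
  destruct (not_often P HnP) as [T0 HT0]. intros T.
  destruct (HPQ (Nat.max T T0)) as [t [Ht [HPt|HQt]]].
  - exfalso. apply (HT0 t); [lia | exact HPt].
  - exists t. split; [lia | exact HQt].
Qed.

Lemma eventually_forall_lt (P : nat -> nat -> Prop) n :
  (forall y, (y < n)%nat -> eventually (P y)) ->
  eventually (fun t => forall y, (y < n)%nat -> P y t).
Proof.
  induction n as [|n IH]; intros Hall.
  - exists 0%nat. intros; lia.
  - destruct (eventually_and _ _ (IH (fun y Hy => Hall y ltac:(lia)))
                (Hall n (Nat.lt_succ_diag_r n))) as [T HT].
    exists T. intros t Ht y Hy. destruct (HT t Ht) as [Hlow Hn].
    destruct (Nat.eq_dec y n) as [->|]; [exact Hn | apply Hlow; lia].
Qed.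

Lemma eventually_lt_of_limits (u w : nat -> R) (lu lw : R) :
  Un_cv u lu -> Un_cv w lw -> lu < lw -> eventually (fun t => u t < w t).
Proof.
  intros Hu Hw Hlt.
  destruct (Hu ((lw - lu) / 2)) as [N1 H1]; [lra|].
  destruct (Hw ((lw - lu) / 2)) as [N2 H2]; [lra|].
  exists (Nat.max N1 N2). intros t Ht.
  specialize (H1 t ltac:(lia)). specialize (H2 t ltac:(lia)).
  unfold R_dist in *. apply Rabs_def2 in H1, H2. lra.
Qed.

Lemma eventually_strict_order (u : nat -> nat -> R) (l : nat -> R) n :
  (forall y, (y < n)%nat -> Un_cv (fun t => u t y) (l y)) ->
  eventually (fun t => forall x, (x < n)%nat -> forall y, (y < n)%nat ->
                       l x < l y -> u t x < u t y).
Proof.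
  intros Hcv. apply eventually_forall_lt. intros x Hx.
  apply eventually_forall_lt. intros y Hy.
  destruct (classic (l x < l y)) as [Hlt|Hge].
  - destruct (eventually_lt_of_limits _ _ _ _ (Hcv x Hx) (Hcv y Hy) Hlt) as [T HT].
    exists T. intros t Ht _. apply HT, Ht.
  - exists 0%nat. intros t _ Hlt. contradiction.
Qed.

Lemma limits_eq_of_often_eq (u w : nat -> R) (lu lw : R) :
  Un_cv u lu -> Un_cv w lw -> often (fun t => u t = w t) -> lu = lw.
Proof.
  intros Hu Hw Heq.
  destruct (Rtotal_order lu lw) as [Hlt|[|Hgt]]; [exfalso| assumption | exfalso].
  - destruct (often_eventually _ _ Heq (eventually_lt_of_limits _ _ _ _ Hu Hw Hlt))
      as [t [E Hlt']]. lra.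
  - destruct (often_eventually _ _ Heq (eventually_lt_of_limits _ _ _ _ Hw Hu Hgt))
      as [t [E Hlt']]. lra.
Qed.

Lemma clos_rt_invariant {A : Type} (Rel : relation A) (P : A -> Prop) :
  (forall x y, Rel x y -> P x -> P y) ->
  forall x y, clos_refl_trans A Rel x y -> P x -> P y.
Proof.
  intros Hstep x y Hxy. induction Hxy as [x y Hxy| x | x y z _ IH1 _ IH2]; eauto.
Qed.

Section Gossip.

Variables (m n k : nat) (i1 i2 : nat -> nat).
Variables (X : nat -> nat -> nat -> R) (Xinf : nat -> nat -> R).
Hypothesis hi1 : forall t, (i1 t < m)%nat.
Hypothesis hi2 : forall t, (i2 t < m)%nat.
Hypothesis hdyn : gossip_dynamics n k X i1 i2.
Hypothesis hlim : forall i j, (i < m)%nat -> (j < n)%nat ->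
  Un_cv (fun t => X t i j) (Xinf i j).

Lemma pair_is_endpoints t c d : pair_is i1 i2 t c d ->
  (c = i1 t \/ c = i2 t) /\ (d = i1 t \/ d = i2 t).
Proof. intros [[-> ->]|[-> ->]]; tauto. Qed.

Lemma pair_is_range t c d : pair_is i1 i2 t c d -> (c < m)%nat /\ (d < m)%nat.
Proof.
  intros Hp. destruct (pair_is_endpoints t c d Hp) as [[-> | ->] [-> | ->]]; auto.
Qed.

Lemma Edge_range c d : Edge i1 i2 c d -> (c < m)%nat /\ (d < m)%nat.
Proof.
  intros He. destruct (He 0%nat) as [t [_ Hp]]. exact (pair_is_range t c d Hp).
Qed.

Lemma Sinf_range c d x : Sinf n k X i1 i2 c d x ->
  (c < m)%nat /\ (d < m)%nat /\ (x < n)%nat.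
Proof.
  intros Hs. destruct (Hs 0%nat) as [t [_ [Hp [[Hx _]|[Hx _]]]]];
    destruct (pair_is_range t c d Hp); auto.
Qed.

Lemma topk_in_Sset t z x : z = i1 t \/ z = i2 t ->
  topk n k (X t z) x -> Sset n k X i1 i2 t x.
Proof. intros [-> | ->] Htop; [left | right]; exact Htop. Qed.

(* Fact (1): on S^oo_cd the endpoints c and d have the same limit, since right
   after each firing of {c,d} that updates x both entries equal the average. *)
Lemma Sinf_consensus c d x : Sinf n k X i1 i2 c d x -> Xinf c x = Xinf d x.
Proof.
  intros Hs. destruct (Sinf_range c d x Hs) as [Hc [Hd Hx]].
  apply (limits_eq_of_often_eq (fun t => X t c x) (fun t => X t d x));
    [apply hlim; auto | apply hlim; auto |].
  intros T. destruct (Hs T) as [t [Ht [Hp HS]]].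
  destruct (pair_is_endpoints t c d Hp) as [Hct Hdt].
  exists (S t). split; [lia|].
  rewrite (proj1 (hdyn t c x) (conj Hct HS)), (proj1 (hdyn t d x) (conj Hdt HS)).
  reflexivity.
Qed.

Lemma eventually_Sset_in_Sinf c d : eventually (fun t =>
  forall y, (y < n)%nat -> pair_is i1 i2 t c d -> Sset n k X i1 i2 t y ->
  Sinf n k X i1 i2 c d y).
Proof.
  apply eventually_forall_lt. intros y Hy.
  destruct (classic (Sinf n k X i1 i2 c d y)) as [Hs|Hns].
  - exists 0%nat. auto.
  - destruct (not_often (fun t => pair_is i1 i2 t c d /\ Sset n k X i1 i2 t y) Hns)
      as [T HT].
    exists T. intros t Ht Hp HS. exfalso. exact (HT t Ht (conj Hp HS)).
Qed.

(* At a late firing, x is not in the top-k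
   of z, whose members are in S^oo_cd and beat x, and the limits keep the order. *)
Lemma outside_Sinf_dominated c d z x : (k <= n)%nat ->
  Edge i1 i2 c d -> z = c \/ z = d -> (x < n)%nat -> ~ Sinf n k X i1 i2 c d x ->
  (k <= card_upto n (fun y => Sinf n k X i1 i2 c d y /\ (Xinf z x <= Xinf z y)%R))%nat.
Proof.
  intros hkn He Hz Hx Hns.
  assert (Hzm : (z < m)%nat) by (destruct (Edge_range c d He), Hz as [-> | ->]; auto).
  destruct (often_eventually _ _ He
              (eventually_and _ _ (not_often _ Hns)
                 (eventually_and _ _ (eventually_Sset_in_Sinf c d)
                    (eventually_strict_order (fun t y => X t z y) (Xinf z) n
                       (fun y Hy => hlim z y Hzm Hy)))))
    as [t [Hp [HnS [HinS Hord]]]].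
  assert (Hzt : z = i1 t \/ z = i2 t)
    by (destruct (pair_is_endpoints t c d Hp), Hz as [-> | ->]; auto).
  assert (Hntop : ~ topk n k (X t z) x)
    by (intro Htop; apply HnS; split; [exact Hp | exact (topk_in_Sset t z x Hzt Htop)]).
  eapply Nat.le_trans; [exact (not_topk_many_above n k (X t z) x hkn Hx Hntop)|].
  apply card_upto_mono. intros y Hy [Htop Hlt]. split.
  - exact (HinS y Hy Hp (topk_in_Sset t z y Hzt Htop)).
  - apply Rnot_lt_le. intro Hlt'. specialize (Hord y Hy x Hx Hlt'). lra.
Qed.

Definition few_reach (c : nat) (w : R) : Prop :=
  (card_upto n (fun y => (w <= Xinf c y)%R) < k)%nat.

Lemma few_reach_of_often_topk c x :
  (1 <= k)%nat -> (c < m)%nat -> (x < n)%nat ->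
  often (fun t => topk n k (X t c) x) -> forall w, Xinf c x < w -> few_reach c w.
Proof.
  intros hk1 Hc Hx Hoften w Hw.
  destruct (often_eventually _ _ Hoften
              (eventually_strict_order (fun t y => X t c y) (Xinf c) n
                 (fun y Hy => hlim c y Hc Hy))) as [t [Htop Hord]].
  eapply Nat.le_lt_trans; [|exact (topk_few_strictly_above n k (X t c) x hk1 Htop)].
  apply card_upto_mono. intros y Hy Hwy. apply Hord; auto. lra.
Qed.

(* A candidate of level >= w at d
   outside S^oo_cd would be dominated by k candidates of S^oo_cd, whose levels
   at c are the same by consensus; otherwise all such candidates are in S^oo_cd. *)
Lemma few_reach_edge c d w : (k <= n)%nat -> Edge i1 i2 c d ->
  few_reach c w -> few_reach d w.
Proof.
  intros hkn He Hfew. unfold few_reach in *.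
  destruct (classic (exists y, (y < n)%nat /\ w <= Xinf d y /\
                             ~ Sinf n k X i1 i2 c d y))
    as [[y [Hy [Hwy Hns]]]|Hall].
  - exfalso.
    pose proof (outside_Sinf_dominated c d d y hkn He (or_intror eq_refl) Hy Hns)
      as Hmany.
    enough (card_upto n (fun z => Sinf n k X i1 i2 c d z /\ (Xinf d y <= Xinf d z)%R)
            <= card_upto n (fun z => (w <= Xinf c z)%R))%nat by lia.
    apply card_upto_mono. intros z _ [Hs Hle].
    rewrite (Sinf_consensus c d z Hs). lra.
  - eapply Nat.le_lt_trans; [|exact Hfew].
    apply card_upto_mono. intros y Hy Hwy.
    rewrite (Sinf_consensus c d y); [exact Hwy|].
    apply NNPP. intro Hns. apply Hall. eauto.
Qed.

(* Fact (3b): a candidate x reached by fewer than k candidates at c lies in S^oo_cd,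
   for otherwise fact (2) would give k of them. *)
Lemma leader_in_Sinf c d x : (k <= n)%nat -> Edge i1 i2 c d -> (x < n)%nat ->
  few_reach c (Xinf c x) -> Sinf n k X i1 i2 c d x.
Proof.
  intros hkn He Hx Hfew. apply NNPP. intro Hns. unfold few_reach in Hfew.
  pose proof (outside_Sinf_dominated c d c x hkn He (or_introl eq_refl) Hx Hns)
    as Hmany.
  enough (card_upto n (fun y => Sinf n k X i1 i2 c d y /\ (Xinf c x <= Xinf c y)%R)
          <= card_upto n (fun y => (Xinf c x <= Xinf c y)%R))%nat by lia.
  apply card_upto_mono. intros y _ [_ Hle]. exact Hle.
Qed.

Lemma leader_edge c d x : (k <= n)%nat -> Edge i1 i2 c d -> (x < n)%nat ->
  few_reach c (Xinf c x) -> few_reach d (Xinf d x).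
Proof.
  intros hkn He Hx Hfew.
  rewrite <- (Sinf_consensus c d x (leader_in_Sinf c d x hkn He Hx Hfew)).
  exact (few_reach_edge c d _ hkn He Hfew).
Qed.

Lemma often_topk_endpoint c d x : Sinf n k X i1 i2 c d x ->
  often (fun t => topk n k (X t c) x) \/ often (fun t => topk n k (X t d) x).
Proof.
  intros Hs. apply often_or. intros T.
  destruct (Hs T) as [t [Ht [Hp HS]]]. exists t. split; [exact Ht|].
  destruct Hp as [[<- <-]|[<- <-]], HS; tauto.
Qed.

End Gossip.

Theorem mainTheorem6
  (m n k : nat) (hm : (2 <= m)%nat) (hn : (1 <= n)%nat)
  (hk1 : (1 <= k)%nat) (hkn : (k <= n)%nat)
  (i1 i2 : nat -> nat)
  (hi1 : forall t, (i1 t < m)%nat) (hi2 : forall t, (i2 t < m)%nat)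
  (hdist : forall t, i1 t <> i2 t)
  (hconn : connected_graph m i1 i2)
  (X : nat -> nat -> nat -> R)
  (hdyn : gossip_dynamics n k X i1 i2)
  (Xinf : nat -> nat -> R)
  (hlim : forall i j, (i < m)%nat -> (j < n)%nat ->
            Un_cv (fun t => X t i j) (Xinf i j))
  (a b : nat) (hab : Edge i1 i2 a b)
  (alpha : R)
  (halpha : is_min_on (Sinf n k X i1 i2 a b) (fun j => Xinf a j) alpha)
  (i j : nat) (hi : (i < m)%nat) (hj : (j < n)%nat)
  (hgt : alpha < Xinf i j) :
  forall a' b', Edge i1 i2 a' b' -> Sinf n k X i1 i2 a' b' j.
Proof.
  destruct halpha as [[js [Hjs Hjs_alpha]] _].
  destruct (Sinf_range m n k i1 i2 X hi1 hi2 a b js Hjs) as [Ha [Hb Hjs_n]].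
  pose proof (Sinf_consensus m n k i1 i2 X Xinf hi1 hi2 hdyn hlim) as Hconsensus.
  assert (Hc : exists c, (c < m)%nat /\ Xinf c js = alpha /\
                 often (fun t => topk n k (X t c) js)).
  { destruct (often_topk_endpoint n k i1 i2 X a b js Hjs) as [Hoft|Hoft].
    - exists a. auto.
    - exists b. rewrite <- (Hconsensus a b js Hjs). auto. }
  destruct Hc as [c [Hc [Hc_alpha Hoft]]].
  assert (Hlead_i : few_reach n k Xinf i (Xinf i j)).
  { apply (clos_rt_invariant _ (fun z => few_reach n k Xinf z (Xinf i j))
             (fun c' d' => few_reach_edge m n k i1 i2 X Xinf hi1 hi2 hdyn hlim
                             c' d' _ hkn)
             c i (hconn c i Hc hi)).
    apply (few_reach_of_often_topk m n k X Xinf hlim c js hk1 Hc Hjs_n Hoft).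
    lra. }
  intros a' b' He.
  destruct (Edge_range m i1 i2 hi1 hi2 a' b' He) as [Ha' _].
  apply (leader_in_Sinf m n k i1 i2 X Xinf hi1 hi2 hlim a' b' j hkn He hj).
  apply (clos_rt_invariant _ (fun z => few_reach n k Xinf z (Xinf z j))
           (fun c' d' He' => leader_edge m n k i1 i2 X Xinf hi1 hi2 hdyn hlim
                               c' d' j hkn He' hj)
           i a' (hconn i a' hi Ha') Hlead_i).
Qed.
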